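(* Let $d\in\mathbb N$, let $D\subset\mathbb R_+^d$ be a nonempty convex compact set, and let $\mathcal P\subset\mathbb R_+^d$ be a nonempty convex compact polytope. Then $$\inf_{\alpha\in\mathcal P}\max_{y\in D}\min_{i\in[d]}\frac{y_i}{\alpha_i}=\min_{\alpha\in\mathcal P}\max_{y\in D}\min_{i\in[d]}\frac{y_i}{\alpha_i}.$$ That is, the infimum is attained at some $\alpha\in\mathcal P$.
   Context: A ratio $\frac{y_i}{\alpha_i}$ with $\alpha_i=0$ is defined to be $+\infty$. In particular the inner quantity equals $+\infty$ at $\alpha=0$. *)

From HB Require Import structures.
From mathcomp Require Import all_boot all_order all_algebra.
From mathcomp Require Import all_classical all_reals all_analysis.
Set Implicit Arguments. Unset Strict Implicit. Unset Printing Implicit Defensive.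
Import Order.TTheory GRing.Theory Num.Theory.
Import numFieldNormedType.Exports.
Local Open Scope classical_set_scope.
Local Open Scope ring_scope.

(* Points of R^d are row vectors 'rV[R]_d; coordinate i of x is x 0 i. *)

Definition nonneg_orthant (R : realType) (d : nat) : set 'rV[R]_d :=
  [set x | forall i : 'I_d, 0 <= x 0 i].

Definition conv_hull_seq (R : realType) (d : nat) (s : seq 'rV[R]_d)
  : set 'rV[R]_d :=
  [set x | exists w : 'I_(size s) -> R,
     (forall j, 0 <= w j) /\ \sum_(j < size s) w j = 1 /\
     x = \sum_(j < size s) w j *: s`_j].

Definition polytope (R : realType) (d : nat) (P : set 'rV[R]_d) : Prop :=
  exists s : seq 'rV[R]_d, P = conv_hull_seq s.

Definition eratio (R : realType) (y a : R) : \bar R :=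
  if a == 0 then +oo%E else (y / a)%:E.

(* min_{i in [d]} y_i / alpha_i  (equals +oo when alpha = 0) *)
Definition min_ratio (R : realType) (d : nat) (alpha y : 'rV[R]_d) : \bar R :=
  \big[Order.min/+oo%E]_(i < d) eratio (y 0 i) (alpha 0 i).

Definition maxmin_ratio (R : realType) (d : nat) (D : set 'rV[R]_d)
  (alpha : 'rV[R]_d) : \bar R :=
  ereal_sup [set min_ratio alpha y | y in D].

From HB Require Import structures.
From mathcomp Require Import all_boot all_order all_algebra.
From mathcomp Require Import all_classical all_reals all_analysis.
From mathcomp Require Import ring lra.
Import Order.TTheory GRing.Theory Num.Theory.
Import numFieldNormedType.Exports.
Local Open Scope classical_set_scope.
Local Open Scope ring_scope.
Local Open Scope convex_scope.

(* Write f(α) = sup_{y ∈ D} min_i y_i/α_i and suppose its infimum r over P is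
   not attained, so that f > r ≥ 0 on P.  Choose z ∈ D of maximal support; every
   α ∈ P with f(α) > 0 has its support inside that of z.  Replacing a witness y
   of f(α) > r by a convex combination with a little of z gives a point of D that
   is positive on that support, and this makes the bound f > r persist on a
   neighbourhood of α.  Compactness of P then gives f ≥ m > r on all of P,
   contradicting inf f = r. *)

Lemma lte_EFin_dense {R : realType} (r : R) (x : \bar R) :
  (r%:E < x)%E -> exists2 s, r < s & (s%:E <= x)%E.
Proof.
case: x => [v| |] //; rewrite ?lte_fin => r_lt.
- by exists ((r + v) / 2); [lra | rewrite lee_fin; lra].
- by exists (r + 1); [lra | exact: leey].
Qed.

Lemma near_coords_lt {R : realType} {d : nat} (a : 'rV[R]_d)
    (P : pred 'I_d) (e : 'I_d -> R) :
  (forall k, P k -> 0 < e k) ->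
  \forall b \near a, forall k, P k -> `|a 0 k - (b : 'rV[R]_d) 0 k| < e k.
Proof.
move=> e_gt0.
apply: (@filter_forall _ 'I_d
  (fun k (b : 'rV[R]_d) => P k -> `|a 0 k - b 0 k| < e k) (nbhs a) _) => k.
have [Pk|_] := boolP (P k); last exact: nearW.
have coord_k := @coord_continuous R 1 d 0 k a.
by apply: filterS (cvgr_dist_lt _ _ coord_k _ (e_gt0 k Pk)) => b + _.
Qed.

Lemma compact_uniform_lower_bound {R : realType} {T : topologicalType}
    (K : set T) (g : T -> \bar R) (r : R) : compact K ->
  (forall a, K a -> exists2 m, r < m & \forall b \near a, K b -> (m%:E <= g b)%E) ->
  exists2 m, r < m & forall b, K b -> (m%:E <= g b)%E.
Proof.
move=> /compact_near_coveringP/near_covering_withinP cover local_bound.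
have : \forall m \near r^'+, K `<=` (fun b => m%:E <= g b)%E.
  apply: cover => a Ka; have [m r_lt_m near_a] := local_bound a Ka.
  exists ([set b | K b -> (m%:E <= g b)%E], [set j | j < m]).
    by split=> //; exact: nbhs_right_lt.
  move=> [b j] /= [Kb_le j_lt_m] Kb.
  by apply: le_trans (Kb_le Kb); rewrite lee_fin ltW.
by move=> /(filterI (nbhs_right_gt r))/filter_ex[m [r_lt_m Km]]; exists m.
Qed.

Lemma conv_coord {R : realType} {d : nat} (p : {i01 R}) (x y : 'rV[R]_d) i :
  ((x : convex_lmodType 'rV[R]_d) <| p |> y) 0 i =
  p%:num * x 0 i + (1 - p%:num) * y 0 i.
Proof. by rewrite !mxE. Qed.

Section min_ratio.
Context {R : realType} {d : nat}.
Implicit Types (a y : 'rV[R]_d) (t : R).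

Lemma min_ratio_geP {t a y} : nonneg_orthant a -> nonneg_orthant y ->
  (t%:E <= min_ratio a y)%E <-> forall i, t * a 0 i <= y 0 i.
Proof.
move=> a_ge0 y_ge0; split=> [t_le i|t_le].
  have := le_trans t_le (bigmin_le _ i _); rewrite /eratio.
  have [->|ai_neq0] := eqVneq (a 0 i) 0.
    by rewrite mulr0 => _; exact: y_ge0.
  have ai_gt0 : 0 < a 0 i by rewrite lt_def ai_neq0; apply: a_ge0.
  by rewrite lee_fin ler_pdivlMr.
apply: le_bigmin => [|i _]; first exact: leey.
rewrite /eratio; have [_|ai_neq0] := eqVneq (a 0 i) 0; first exact: leey.
have ai_gt0 : 0 < a 0 i by rewrite lt_def ai_neq0; apply: a_ge0.
by rewrite lee_fin ler_pdivlMr.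
Qed.

Lemma min_ratio_ge0 {a y} : nonneg_orthant a -> nonneg_orthant y ->
  (0 <= min_ratio a y)%E.
Proof. by move=> a_ge0 y_ge0; apply/min_ratio_geP => // i; rewrite mul0r. Qed.

Lemma min_ratio_le0 a y i : 0 < a 0 i -> y 0 i = 0 -> (min_ratio a y <= 0)%E.
Proof.
move=> ai_gt0 yi0; apply: le_trans (bigmin_le _ i _) _.
by rewrite /eratio gt_eqF // yi0 mul0r.
Qed.

Lemma min_ratio_conv_near_ge {lam : {i01 R}} {z y a} {s : R} :
  0 < lam%:num -> 0 < s -> nonneg_orthant z -> nonneg_orthant y ->
  (forall k, s * a 0 k <= y 0 k) ->
  \forall b \near a, nonneg_orthant b -> (forall k, 0 < b 0 k -> 0 < z 0 k) ->
    (((1 - lam%:num) * s)%:E <=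
      min_ratio b ((z : convex_lmodType 'rV[R]_d) <| lam |> y))%E.
Proof.
move=> lam_gt0 s_gt0 z_ge0 y_ge0 sa_le_y.
have lam_le1 : lam%:num <= 1 by [].
have tol_gt0 k : 0 < z 0 k -> 0 < lam%:num * z 0 k / s.
  by move=> zk_gt0; rewrite divr_gt0 // mulr_gt0.
apply: filterS (near_coords_lt a (fun k => 0 < z 0 k) _ tol_gt0).
move=> b near_b b_ge0 supp_b.
have conv_ge0 : nonneg_orthant ((z : convex_lmodType 'rV[R]_d) <| lam |> y).
  by move=> k; rewrite conv_coord; have := z_ge0 k; have := y_ge0 k; nra.
apply/min_ratio_geP => // k; rewrite conv_coord.
have := z_ge0 k; have := y_ge0 k; have := b_ge0 k; have := sa_le_y k.
have [-> *|bk_neq0 sak zk yk bk] := eqVneq (b 0 k) 0; first by nra.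
have /near_b near_bk : 0 < z 0 k by apply: supp_b; rewrite lt_def bk_neq0.
rewrite ltr_pdivlMr // in near_bk.
have : s * (b 0 k - a 0 k) <= s * `|a 0 k - b 0 k|.
  by rewrite ler_wpM2l ?(ltW s_gt0) // distrC ler_norm.
have : (1 - lam%:num) * (s * `|a 0 k - b 0 k|) <= s * `|a 0 k - b 0 k|.
  by rewrite ler_piMl ?mulr_ge0 ?(ltW s_gt0) //; lra.
nra.
Qed.

End min_ratio.

Section maxmin_ratio.
Context {R : realType} {d : nat} {D : set 'rV[R]_d}.
Hypotheses (D_ge0 : D `<=` @nonneg_orthant R d) (D_convex : convex_set D).
Implicit Types (a b y z : 'rV[R]_d).

Lemma maxmin_ratio_ge0 a : D !=set0 -> nonneg_orthant a ->
  (0 <= maxmin_ratio D a)%E.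
Proof.
move=> [y Dy] a_ge0; apply: le_trans (min_ratio_ge0 a_ge0 (D_ge0 _ Dy)) _.
by apply: ereal_sup_ubound; exists y.
Qed.

Lemma maxmin_ratio_le0 {a i} : 0 < a 0 i -> (forall y, D y -> y 0 i = 0) ->
  (maxmin_ratio D a <= 0)%E.
Proof.
move=> ai_gt0 Di0; apply: ge_ereal_sup => _ [y Dy <-].
exact: min_ratio_le0 ai_gt0 (Di0 _ Dy).
Qed.

Lemma convex_max_support : D !=set0 ->
  exists2 z, D z & forall y i, D y -> 0 < y 0 i -> 0 < z 0 i.
Proof.
move=> [y0 Dy0].
suff /(_ (enum 'I_d)) [z Dz z_gt0] : forall s : seq 'I_d, exists2 z, D z &
    forall y i, i \in s -> D y -> 0 < y 0 i -> 0 < z 0 i.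
  by exists z => // y i; apply: z_gt0; rewrite mem_enum.
elim=> [|j s [z Dz z_gt0]]; first by exists y0.
have half_ge0 : 0 <= 1 / 2 :> R by lra.
have half_le1 : 1 / 2 <= 1 :> R by lra.
have [[w Dw wj_gt0]|no_w] := pselect (exists2 w, D w & 0 < w 0 j).
  exists ((z : convex_lmodType 'rV[R]_d) <| Itv01 half_ge0 half_le1 |> w).
    by rewrite -in_setE; apply: D_convex; rewrite in_setE.
  move=> y i; rewrite inE conv_coord /= => /orP[/eqP-> _ _|i_s Dy yi_gt0].
    by have := D_ge0 _ Dz j; lra.
  by have := z_gt0 _ _ i_s Dy yi_gt0; have := D_ge0 _ Dw i; lra.
exists z => // y i; rewrite inE => /orP[/eqP->|i_s] Dy yi_gt0.
  by exfalso; apply: no_w; exists y.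
exact: z_gt0 i_s Dy yi_gt0.
Qed.

Lemma maxmin_ratio_gt0_support b k : (0 < maxmin_ratio D b)%E -> 0 < b 0 k ->
  exists2 y, D y & 0 < y 0 k.
Proof.
move=> fb_gt0 bk_gt0; apply: contrapT => no_y.
suff : (maxmin_ratio D b <= 0)%E by rewrite leNgt fb_gt0.
apply: (maxmin_ratio_le0 bk_gt0) => y Dy; apply/eqP.
rewrite eq_le D_ge0 // andbT leNgt; apply/negP => yk_gt0.
by apply: no_y; exists y.
Qed.

Lemma maxmin_ratio_near_ge {z a} {r : R} : D z -> 0 <= r -> nonneg_orthant a ->
  (r%:E < maxmin_ratio D a)%E ->
  exists2 m, r < m & \forall b \near a, nonneg_orthant b ->
    (forall k, 0 < b 0 k -> 0 < z 0 k) -> (m%:E <= maxmin_ratio D b)%E.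
Proof.
move=> Dz r_ge0 a_ge0 /ereal_sup_gt[_ [y Dy <-] /lte_EFin_dense[s r_lt_s]].
move=> /(min_ratio_geP a_ge0 (D_ge0 _ Dy)) sa_le_y.
have s_gt0 : 0 < s by lra.
have lam_ge0 : 0 <= (s - r) / (2 * s) by apply: divr_ge0; lra.
have lam_le1 : (s - r) / (2 * s) <= 1 by rewrite ler_pdivrMr; lra.
pose lam := Itv01 lam_ge0 lam_le1.
have lam_gt0 : 0 < lam%:num by rewrite divr_gt0 //; lra.
(* Mixing in a little of z keeps every coordinate of the support of z away from 0. *)
pose y' := (z : convex_lmodType 'rV[R]_d) <| lam |> y.
have Dy' : D y' by rewrite -in_setE; apply: D_convex; rewrite in_setE.
exists ((1 - lam%:num) * s).
  have -> : (1 - lam%:num) * s = (r + s) / 2 by rewrite /=; field; lra.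
  lra.
have := min_ratio_conv_near_ge lam_gt0 s_gt0 (D_ge0 _ Dz) (D_ge0 _ Dy) sa_le_y.
apply: filterS => b y'_ge b_ge0 supp_b; apply: le_trans (y'_ge b_ge0 supp_b) _.
by apply: ereal_sup_ubound; exists y'.
Qed.

End maxmin_ratio.

Theorem mainTheorem5 (R : realType) (d : nat) (D P : set 'rV[R]_d) :
  D !=set0 -> D `<=` @nonneg_orthant R d -> convex_set D -> compact D ->
  P !=set0 -> P `<=` @nonneg_orthant R d -> convex_set P -> compact P ->
  polytope P ->
  exists2 alpha0 : 'rV[R]_d, P alpha0 &
    maxmin_ratio D alpha0 = ereal_inf [set maxmin_ratio D alpha | alpha in P].
Proof.
move=> D0 D_ge0 D_convex _ [a0 Pa0] P_ge0 _ P_compact _.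
set f := maxmin_ratio D; set T := ereal_inf _.
have f_ge0 a : P a -> (0 <= f a)%E by move/P_ge0; exact: maxmin_ratio_ge0.
have T_ge0 : (0 <= T)%E by apply: le_ereal_inf_tmp => _ [a Pa <-]; exact: f_ge0.
apply: contrapT => not_attained.
have T_lt a : P a -> (T < f a)%E.
  move=> Pa; rewrite lt_neqAle ereal_inf_lbound ?andbT; last by exists a.
  by apply/eqP => Tfa; apply: not_attained; exists a.
have [r Tr] : exists r, T = r%:E.
  exists (fine T); rewrite fineK // ge0_fin_numE //.
  exact: lt_le_trans (T_lt _ Pa0) (leey _).
have r_ge0 : 0 <= r by rewrite -lee_fin -Tr.
have [z Dz z_max] := convex_max_support D_ge0 D_convex D0.
have supp_P b k : P b -> 0 < b 0 k -> 0 < z 0 k.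
  move=> Pb /(maxmin_ratio_gt0_support D_ge0)[|y Dy yk_gt0].
    exact: le_lt_trans T_ge0 (T_lt _ Pb).
  exact: z_max Dy yk_gt0.
have [m r_lt_m m_le] : exists2 m, r < m & forall b, P b -> (m%:E <= f b)%E.
  apply: (compact_uniform_lower_bound P f r P_compact) => a Pa.
  have r_lt_fa : (r%:E < f a)%E by rewrite -Tr; exact: T_lt.
  have [m r_lt_m near_a] :=
    maxmin_ratio_near_ge D_ge0 D_convex Dz r_ge0 (P_ge0 _ Pa) r_lt_fa.
  exists m => //; apply: filterS near_a => b f_ge Pb.
  by apply: f_ge => [|k]; [exact: P_ge0 | exact: supp_P].
have : (m%:E <= T)%E by apply: le_ereal_inf_tmp => _ [b Pb <-]; exact: m_le.
by rewrite Tr lee_fin leNgt r_lt_m.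
Qed.
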